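(* Assume the Setup and Matrix Notation below. Fix $i,j\in I$ and let $Z=\begin{pmatrix}P&Q\\R&S\end{pmatrix}$ be an $r\times r$ matrix over $\mathcal O_X(U_i\cap U_j)$, with $P$ of size $(r-2)\times(r-2)$, $Q$ of size $(r-2)\times 2$, $R$ of size $2\times(r-2)$, $S$ of size $2\times 2$. Then $M_i=ZM_j$ if and only if: (i) $P=P_{ij}=\Delta_{t_i}T'_i\Delta'_{t_j}$; (ii) $R=T''_i\Delta'_{t_j}$; (iii) $Q\,(f_j,g_j)^T=(-1)^{t_j}\,\Delta_{t_i}T'_i\,\mathbf s_j$; (iv) $S\,(f_j,g_j)^T=(-1)^{t_j}s_{jt_i}\,(f_i,g_i)^T$ (this holds in particular for $S=(-1)^{t_j}s_{jt_i}A_{ij}$). Moreover, such a matrix $Z$ always exists, and can be taken with $S=(-1)^{t_j}s_{jt_i}A_{ij}$; for any $Z$ satisfying (i)–(iv) with $S=(-1)^{t_j}s_{jt_i}A_{ij}$, one has $\det S=(-1)^{t_i}s_{jt_i}h_{ij}$ and $\det Z=h_{ij}$.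
   Context: Setup. $k$ is an algebraically closed field, $X$ a smooth irreducible algebraic variety over $k$, $Y\subset X$ a local complete intersection subscheme of codimension two with ideal sheaf $\mathcal J$ and normal bundle $N$, $L$ a line bundle on $X$, $r\ge 2$ an integer, and $s_1,\dots,s_{r-1}$ global sections generating $\bigwedge^2N\otimes L^*|_Y$. A bar denotes the class modulo the ideal of $Y$. $\{U_i\}_{i\in I}$ is a cover of $X$ by affine open sets such that: (a) $L|_{U_i}$ is trivial, with transition functions $h_{ij}\in\mathcal O_X(U_i\cap U_j)^\times$, $h_{ij}h_{jk}=h_{ik}$; (b) $f_i,g_i\in\mathcal O_X(U_i)$ generate $\mathcal J(U_i)$ (with $f_i=1,g_i=0$ if $Y\cap U_i=\emptyset$), and for every affine open $V\subseteq U_i$ and $u,v\in\mathcal O_X(V)$ with $uf_i=vg_i$ there is $w\in\mathcal O_X(V)$ with $u=wg_i$, $v=wf_i$; (c) for all $i,j$, $A_{ij}$ is a $2\times2$ matrix over $\mathcal O_X(U_i\cap U_j)$ with $(f_i,g_i)^T=A_{ij}(f_j,g_j)^T$; (d) $s_{it}\in\mathcal O_X(U_i)$ ($t=1,\dots,r-1$) satisfy $\bar s_{it}=\frac{\det\bar A_{ij}}{\bar h_{ij}}\bar s_{jt}$ on $Y\cap U_i\cap U_j$ (they represent $s_t$ locally); (e) there are indices $t_i\in\{1,\dots,r-1\}$ with $s_{it_i}=(-1)^{t_i}$, and for all $i,j$ the function $s_{jt_i}$ is a unit on $U_i\cap U_j$ and $\det A_{ij}=(-1)^{t_i}h_{ij}/s_{jt_i}$.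 Matrix Notation. $\Delta_t$ is the identity matrix (size clear from context) with its $t$-th row removed and $\Delta'_t$ its transpose; thus $\Delta_tM$ is $M$ without its $t$-th row and $M\Delta'_t$ is $M$ without its $t$-th column. $\mathbf s_i=(s_{i1},\dots,s_{i,r-1})^T$. $T'_i$ is the $(r-1)\times(r-1)$ matrix equal to the identity except for its $t_i$-th column, whose $t_i$-th entry is $1$ and whose $t$-th entry is $-(-1)^{t_i}s_{it}$ for $t\ne t_i$. $T''_i$ is the $2\times(r-1)$ matrix whose $t_i$-th column is $(f_i,g_i)^T$ and whose other columns are zero. $M_i=\begin{pmatrix}\Delta_{t_i}T'_i\\ T''_i\end{pmatrix}$ (an $r\times(r-1)$ matrix). $P_{ij}=\Delta_{t_i}T'_i\Delta'_{t_j}$. *)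

(* Everything takes place in the ring R = O_X(U_i \cap U_j).
   Conventions: r = n.+2 (so r >= 2), r-1 = n.+1, r-2 = n.
   Indices t in {1,...,r-1} of the paper are ordinals t : 'I_n.+1 with
   paper index = val t + 1; hence (-1)^t (paper) is sgn t := (-1)^+(t.+1). *)
From HB Require Import structures.
From mathcomp Require Import all_boot all_order all_algebra.
Set Implicit Arguments. Unset Strict Implicit. Unset Printing Implicit Defensive.
Import GRing.Theory.
Local Open Scope ring_scope.

Section Defs.
Variable R : comNzRingType.

Definition sgn (m : nat) (t : 'I_m) : R := (-1) ^+ (t.+1).

Definition vec2 (f g : R) : 'cV[R]_2 :=
  \col_(a < 2) (if val a == 0%N then f else g).

Definition Delta (n : nat) (t : 'I_n.+1) : 'M[R]_(n, n.+1) :=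
  row' t (1%:M : 'M[R]_n.+1).
Definition Delta' (n : nat) (t : 'I_n.+1) : 'M[R]_(n.+1, n) := (Delta t)^T.

Definition Tp (n : nat) (t : 'I_n.+1) (s : 'cV[R]_n.+1) : 'M[R]_n.+1 :=
  \matrix_(a, b) (if b == t then (if a == t then 1 else - (sgn t * s a ord0))
                  else (a == b)%:R).

Definition Tpp (n : nat) (t : 'I_n.+1) (f g : R) : 'M[R]_(2, n.+1) :=
  \matrix_(a, b) (if b == t then vec2 f g a ord0 else 0).

Definition Mmat (n : nat) (t : 'I_n.+1) (s : 'cV[R]_n.+1) (f g : R)
  : 'M[R]_(n + 2, n.+1) :=
  col_mx (Delta t *m Tp t s) (Tpp t f g).

Definition Pmat (n : nat) (ti tj : 'I_n.+1) (si : 'cV[R]_n.+1) : 'M[R]_n :=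
  Delta ti *m Tp ti si *m Delta' tj.

Definition in_ideal2 (f g x : R) : Prop := exists a b : R, x = a * f + b * g.

Definition koszul2 (f g : R) : Prop :=
  forall u v : R, u * f = v * g -> exists w : R, u = w * g /\ v = w * f.

End Defs.
Arguments sgn {R m} t.
Arguments Delta {R n} t.
Arguments Delta' {R n} t.

(* A matrix X with r - 1 columns is determined by X Δ'_t and X s as soon as
   s_t = (-1)^t, since e_t is then recovered from s modulo the other basis
   vectors.  For X = M_j these two products are (1; 0) and
   (0; (-1)^{t_j} (f_j, g_j)), so M_i = Z M_j unfolds into (i)-(iv).
   Condition (d) puts every entry of Δ_{t_i} T'_i s_j into the ideal (f_j, g_j),
   which yields Q.  For the determinant, border [X Δ'_t | X s] by a column w:
   its determinant does not depend on the frame (t, s), being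
   (-1)^{r-1} det [X | w].  Writing Z [M_j Δ'_{t_j} | M_j s_j | w] in the
   frame of j and of i, with w = (0, y) and det [(f_j, g_j) | y] <> 0,
   gives det Z = h_ij. *)

From HB Require Import structures.
From mathcomp Require Import all_boot all_order all_algebra.
From mathcomp Require Import perm ring.
Set Implicit Arguments.
Unset Strict Implicit.
Unset Printing Implicit Defensive.
Import GRing.Theory.
Local Open Scope ring_scope.

Section Frames.
Variables (R : comNzRingType) (n : nat).
Implicit Types (t : 'I_n.+1) (s r : 'cV[R]_n.+1) (f g : R).

Lemma mul_sgn_sgn t : sgn t * sgn t = 1 :> R.
Proof. by rewrite /sgn -exprD -signr_odd addnn odd_double expr0. Qed.

Lemma mulmx_Delta' m (A : 'M[R]_(m, n.+1)) t : A *m Delta' t = col' t A.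
Proof.
apply/matrixP => a b; rewrite !mxE (bigD1 (lift t b)) //= big1 ?addr0.
  by rewrite !mxE eqxx mulr1.
by move=> k kb; rewrite !mxE eq_sym (negbTE kb) mulr0.
Qed.

Lemma mul_Delta_mx m (A : 'M[R]_(n.+1, m)) t : Delta t *m A = row' t A.
Proof.
apply/matrixP => a b; rewrite !mxE (bigD1 (lift t a)) //= big1 ?addr0.
  by rewrite !mxE eqxx mul1r.
by move=> k ka; rewrite !mxE eq_sym (negbTE ka) mul0r.
Qed.

Lemma Delta_Delta' t : Delta t *m Delta' t = 1%:M :> 'M[R]_n.
Proof.
by rewrite mulmx_Delta'; apply/matrixP => a b; rewrite !mxE (inj_eq lift_inj).
Qed.

Lemma Delta'_Delta t : Delta' t *m Delta t + delta_mx t t = 1%:M :> 'M[R]_n.+1.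
Proof.
apply/matrixP => a b; rewrite !mxE.
rewrite /Delta' /Delta; case: (unliftP t a) => [a'|] ->.
  rewrite (bigD1 a') //= big1 ?addr0 => [|k /negbTE ka].
    have /negbTE -> : lift t a' != t by rewrite eq_sym neq_lift.
    by rewrite !mxE eqxx mul1r addr0.
  by rewrite !mxE (inj_eq lift_inj) ka mul0r.
rewrite big1 ?add0r => [|k _]; first by rewrite eqxx /= eq_sym.
by rewrite !mxE eq_sym (negbTE (neq_lift t k)) mul0r.
Qed.

Lemma col'_col_decomp m (A : 'M[R]_(m, n.+1)) t :
  col' t A *m Delta t + col t A *m delta_mx 0 t = A.
Proof.
by rewrite -mulmx_Delta' colE -!mulmxA mul_delta_mx -mulmxDr Delta'_Delta mulmx1.
Qed.

Lemma mulmx_col'_col m (A : 'M[R]_(m, n.+1)) t s :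
  A *m s = col' t A *m (Delta t *m s) + s t ord0 *: col t A.
Proof.
rewrite -{1}(col'_col_decomp A t) mulmxDl -!mulmxA -rowE.
by rewrite [row t s]mx11_scalar mul_mx_scalar mxE.
Qed.

Lemma scale_sgnK m k t :
  cancel (fun x : 'M[R]_(m, k) => sgn t *: x) (fun x => sgn t *: x).
Proof. by move=> x; rewrite scalerA mul_sgn_sgn scale1r. Qed.

Lemma eq_mx_Delta' m (A B : 'M[R]_(m, n.+1)) t s : s t ord0 = sgn t ->
  A *m Delta' t = B *m Delta' t -> A *m s = B *m s -> A = B.
Proof.
rewrite !mulmx_Delta' => st eqD eqs.
have eqc : sgn t *: col t A = sgn t *: col t B.
  rewrite -st; apply: (addrI (col' t A *m (Delta t *m s))).
  by rewrite -mulmx_col'_col eqD -mulmx_col'_col.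
rewrite -(col'_col_decomp A t) -(col'_col_decomp B t) eqD.
by rewrite (can_inj (scale_sgnK t) eqc).
Qed.

Lemma Tp_mulE t s r a : (Tp t s *m r) a ord0 =
  if a == t then r t ord0 else r a ord0 - sgn t * s a ord0 * r t ord0.
Proof.
rewrite !mxE (bigD1 t) //= !mxE eqxx.
case: eqVneq => [-> | neq_at]; rewrite ?mul1r.
  by rewrite big1 ?addr0 // => k /negbTE kt; rewrite !mxE kt eq_sym kt mul0r.
rewrite (bigD1 a) //= /Tp !mxE (negbTE neq_at) eqxx mul1r.
rewrite big1 ?addr0 => [|k /andP[kt ka]].
  by rewrite mulNr addrC.
by rewrite !mxE (negbTE kt) eq_sym (negbTE ka) mul0r.
Qed.

Lemma Delta_Tp_mulE t s r a : (Delta t *m Tp t s *m r) a ord0 =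
  r (lift t a) ord0 - sgn t * s (lift t a) ord0 * r t ord0.
Proof. by rewrite -mulmxA mul_Delta_mx mxE Tp_mulE eq_sym (negbTE (neq_lift t a)). Qed.

Lemma Tp_mul_self t s : s t ord0 = sgn t -> Tp t s *m s = sgn t *: delta_mx t ord0.
Proof.
move=> st; apply/colP => a; rewrite Tp_mulE !mxE eqxx andbT st.
case: eqVneq => [_ | _]; first by rewrite mulr1.
by rewrite mulrAC mul_sgn_sgn mul1r subrr mulr0.
Qed.

Lemma Tp_Delta' t s : Tp t s *m Delta' t = Delta' t.
Proof.
rewrite mulmx_Delta'; apply/matrixP => a b; rewrite /Delta' /Delta !mxE.
by rewrite eq_sym (negbTE (neq_lift t b)) eq_sym.
Qed.

Lemma Tpp_Delta' t f g : Tpp t f g *m Delta' t = 0.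
Proof.
rewrite mulmx_Delta'; apply/matrixP => a b.
by rewrite !mxE eq_sym (negbTE (neq_lift t b)).
Qed.

Lemma Tpp_mul t f g r : Tpp t f g *m r = r t ord0 *: vec2 f g.
Proof.
apply/colP => a; rewrite !mxE (bigD1 t) //= big1 ?addr0 => [|k /negbTE kt].
  by rewrite !mxE eqxx mulrC.
by rewrite !mxE kt mul0r.
Qed.

Lemma Mmat_Delta' t s f g : Mmat t s f g *m Delta' t = col_mx 1%:M 0.
Proof. by rewrite mul_col_mx -mulmxA Tp_Delta' Delta_Delta' Tpp_Delta'. Qed.

Lemma Mmat_mul t s f g r :
  Mmat t s f g *m r = col_mx (Delta t *m Tp t s *m r) (r t ord0 *: vec2 f g).
Proof. by rewrite mul_col_mx Tpp_mul. Qed.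

Lemma Mmat_mul_self t s f g : s t ord0 = sgn t ->
  Mmat t s f g *m s = col_mx 0 (sgn t *: vec2 f g).
Proof.
move=> st; rewrite Mmat_mul -mulmxA Tp_mul_self // st; congr col_mx.
apply/colP => a; rewrite -scalemxAr mul_Delta_mx !mxE.
by rewrite eq_sym (negbTE (neq_lift t a)) mulr0.
Qed.

Lemma Mmat_eq_block_mulP t u s r f g f' g'
    (P : 'M[R]_n) (Q : 'M[R]_(n, 2)) (Rm : 'M[R]_(2, n)) (S : 'M[R]_2) :
  r u ord0 = sgn u ->
  Mmat t s f g = block_mx P Q Rm S *m Mmat u r f' g' <->
  [/\ P = Pmat t u s, Rm = Tpp t f g *m Delta' u,
      Q *m vec2 f' g' = sgn u *: (Delta t *m Tp t s *m r)
    & S *m vec2 f' g' = (sgn u * r t ord0) *: vec2 f g].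
Proof.
move=> ru; set Z := block_mx P Q Rm S; set Mu := Mmat u r f' g'.
have ZD : Z *m Mu *m Delta' u = col_mx P Rm.
  by rewrite -mulmxA Mmat_Delta' mul_block_col !mulmx1 !mulmx0 !addr0.
have Zr : Z *m Mu *m r = sgn u *: col_mx (Q *m vec2 f' g') (S *m vec2 f' g').
  rewrite -mulmxA Mmat_mul_self // mul_block_col !mulmx0 !add0r.
  by rewrite -!scalemxAr scale_col_mx.
have MD : Mmat t s f g *m Delta' u = col_mx (Pmat t u s) (Tpp t f g *m Delta' u).
  by rewrite mul_col_mx.
split=> [E | [EP ER EQ ES]].
  move: MD (Mmat_mul t s f g r); rewrite E ZD Zr scale_col_mx.
  move=> /eq_col_mx[-> ->] /eq_col_mx[EQ ES]; split=> //.
    by rewrite -EQ scale_sgnK.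
  by rewrite -scalerA -ES scale_sgnK.
apply: (eq_mx_Delta' ru); first by rewrite MD ZD EP ER.
by rewrite Mmat_mul Zr EQ ES scale_col_mx scale_sgnK scalerA mulrA mul_sgn_sgn mul1r.
Qed.

End Frames.

Section Bordered.
Variables (R : comNzRingType) (n : nat).
Implicit Types (X : 'M[R]_(n + 2, n.+1)) (t u : 'I_n.+1) (s r : 'cV[R]_n.+1).

Definition bordered X t (c w : 'cV[R]_(n + 2)) : 'M[R]_(n + 2, n + (1 + 1)) :=
  row_mx (col' t X) (row_mx c w).

Lemma mulmx_bordered (Z : 'M[R]_(n + 2)) X t c w :
  Z *m bordered X t c w = bordered (Z *m X) t (Z *m c) (Z *m w).
Proof.
by rewrite /bordered mul_mx_row (@mul_mx_row _ _ _ 1 1) -!mulmx_Delta' mulmxA.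
Qed.

Lemma det_bordered_mul X t s w :
  \det (bordered X t (X *m s) w) = s t ord0 * \det (bordered X t (col t X) w).
Proof.
pose U : 'M[R]_(n + (1 + 1)) :=
  block_mx 1%:M (row_mx (Delta t *m s) 0) 0 (block_mx (s t ord0)%:M 0 0 1%:M).
have -> : bordered X t (X *m s) w = bordered X t (col t X) w *m U.
  rewrite /bordered /U mul_row_block mul_mx_row !mul_row_block.
  rewrite !mulmx1 !mulmx0 !addr0 !add0r add_row_mx add0r.
  by rewrite mul_mx_scalar -mulmx_col'_col.
rewrite det_mulmx /U (@det_ublock _ n (1 + 1)) (@det_ublock _ 1 1).
by rewrite !det1 det_scalar1 mul1r mulr1 mulrC.
Qed.

Lemma det_xcol m (A : 'M[R]_m) i j : i != j -> \det (xcol i j A) = - \det A.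
Proof.
by move=> ij; rewrite xcolE det_mulmx det_perm odd_tperm ij expr1 mulrN1.
Qed.

(* The frames t and t + 1 differ by exchanging column t with column n. *)
Lemma bordered_col_xcol X t w (ht : (t < n)%N) :
  let t' : 'I_n.+1 := Ordinal (ht : (t.+1 < n.+1)%N) in
  bordered X t (col t X) w =
  xcol (lshift (1 + 1) (Ordinal ht)) (rshift n (lshift 1 ord0))
       (bordered X t' (col t' X) w).
Proof.
move=> t'; apply/matrixP => a b; rewrite /xcol [RHS]mxE.
rewrite -(splitK b); case: (split b) => k /=.
  rewrite /bordered row_mxEl.
  case: (eqVneq k (Ordinal ht)) => [->|hk].
    rewrite tpermL row_mxEr row_mxEl !mxE; congr (X a _).
    by apply/val_inj; rewrite /= /bump leqnn.
  rewrite tpermD.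
      rewrite row_mxEl !mxE; congr (X a _).
      apply/val_inj; rewrite /= /bump.
      have hk' : (k : nat) != t by [].
      by rewrite ltn_neqAle eq_sym hk'.
    by rewrite (inj_eq (@lshift_inj _ _)) eq_sym.
  apply/eqP => /(congr1 val) /= hv.
  by move: (ltn_ord k); rewrite -hv ltnNge leq_addr.
rewrite -(splitK k); case: (split k) => k' /=; rewrite (ord1 k').
  rewrite tpermR /bordered row_mxEr row_mxEl row_mxEl !mxE; congr (X a _).
  by apply/val_inj; rewrite /= /bump ltnn add0n.
rewrite tpermD.
    by rewrite /bordered !row_mxEr.
  apply/eqP => /(congr1 val) /= hv.
  by move: (ht); rewrite hv ltnNge leq_addr.
by apply/eqP => /(congr1 val) /= /eqP; rewrite eqn_add2l.
Qed.

Lemma det_bordered_col X t w : \det (bordered X t (col t X) w) =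
  (-1) ^+ (n - t) * \det (bordered X ord_max (col ord_max X) w).
Proof.
suff shift_det k (u : 'I_n.+1) : (u + k)%N = n -> \det (bordered X u (col u X) w) =
    (-1) ^+ k * \det (bordered X ord_max (col ord_max X) w).
  by apply: shift_det; rewrite subnKC // -ltnS.
elim: k u => [|k IHk] u ukn.
  by rewrite addn0 in ukn; rewrite expr0 mul1r (_ : u = ord_max) //; apply/val_inj.
have ltun : (u < n)%N by rewrite -[X in (_ < X)%N]ukn addnS ltnS leq_addr.
rewrite (bordered_col_xcol _ _ ltun) det_xcol; last first.
  by rewrite -(inj_eq val_inj) /= neq_ltn ltn_addr.
by rewrite IHk ?exprS ?mulN1r ?mulNr //= addSnnS.
Qed.

Lemma eq_det_bordered X t s u r w : s t ord0 = sgn t -> r u ord0 = sgn u ->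
  \det (bordered X t (X *m s) w) = \det (bordered X u (X *m r) w).
Proof.
suff det_frame u' r' : r' u' ord0 = sgn u' ->
    \det (bordered X u' (X *m r') w) =
    (-1) ^+ n.+1 * \det (bordered X ord_max (col ord_max X) w).
  by move=> st ru; rewrite !det_frame.
move=> ru'; rewrite det_bordered_mul ru' det_bordered_col mulrA /sgn -exprD.
by rewrite addSn subnKC // -ltnS.
Qed.

End Bordered.

Section Evaluation.
Variable R : comNzRingType.

Lemma det_row_mx_scale k (x : 'cV[R]_k.+1) (y : 'M[R]_(k.+1, k)) a b :
  \det (row_mx (a *: x) (b *: y)) = a * b ^+ k * \det (row_mx x y).
Proof.
have -> : row_mx (a *: x) (b *: y) = row_mx x y *m block_mx a%:M 0 0 b%:M.
  by rewrite mul_row_block !mulmx0 addr0 add0r !mul_mx_scalar.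
by rewrite det_mulmx (@det_ublock _ 1 k) det_scalar1 det_scalar mulrC.
Qed.

Lemma det_row_mx_vec2 (f g : R) (y : 'cV[R]_2) :
  \det (row_mx (vec2 f g) y) = f * y 1 0 - g * y 0 0.
Proof.
have -> : row_mx (vec2 f g) y =
          \matrix_(a, b) (if val b == 0%N then vec2 f g a 0 else y a 0).
  apply/matrixP => a b; rewrite mxE -(splitK b).
  by case: (split b) => k; rewrite (ord1 k) ?row_mxEl ?row_mxEr.
rewrite (expand_det_col _ 0) !big_ord_recl big_ord0 addr0 /cofactor !det_mx11.
rewrite !mxE /= expr0 expr1 mul1r mulN1r mulrN.
by congr (f * y _ _ - g * y _ _); apply/val_inj.
Qed.

Lemma det_bordered_Mmat n (t : 'I_n.+1) (s : 'cV[R]_n.+1) (f g : R)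
    (a : 'cV[R]_n) (b : 'cV[R]_2) : s t ord0 = sgn t ->
  \det (bordered (Mmat t s f g) t (Mmat t s f g *m s) (col_mx a b)) =
  sgn t * \det (row_mx (vec2 f g) b).
Proof.
move=> st; rewrite /bordered -mulmx_Delta' Mmat_Delta' Mmat_mul_self //.
have -> : row_mx (col_mx 1%:M 0) (row_mx (col_mx 0 (sgn t *: vec2 f g)) (col_mx a b))
        = block_mx 1%:M (row_mx 0 a) 0 (row_mx (sgn t *: vec2 f g) b) :> 'M[R]_(n + 2).
  rewrite block_mxEh; congr row_mx; symmetry; exact: (@block_mxEh _ n 2 1 1).
rewrite (@det_ublock _ n 2) det1 mul1r -[b]scale1r det_row_mx_scale.
by rewrite expr1n mulr1 scale1r.
Qed.

End Evaluation.

Section Transition.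
Variables (R : comNzRingType) (n : nat).

Lemma in_ideal2_mull (f g c x : R) : in_ideal2 f g x -> in_ideal2 f g (c * x).
Proof. by case=> a [b ->]; exists (c * a), (c * b); rewrite mulrDr !mulrA. Qed.

Lemma in_ideal2_mulmx_vec2 m (f g : R) (u : 'cV[R]_m) :
  (forall a, in_ideal2 f g (u a ord0)) -> exists Q : 'M[R]_(m, 2), Q *m vec2 f g = u.
Proof.
move=> uI; have /fin_all_exists[ab Hab] : forall a, exists ab : R * R,
    u a ord0 = ab.1 * f + ab.2 * g.
  by move=> a; have [x [y ->]] := uI a; exists (x, y).
exists (\matrix_(a, b) if val b == 0%N then (ab a).1 else (ab a).2).
apply/colP => a; rewrite !mxE Hab !big_ord_recl big_ord0 !mxE /=.
by rewrite addr0.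
Qed.

Lemma exists_transition_Q (ti tj : 'I_n.+1) (si sj : 'cV[R]_n.+1) (fj gj D : R) :
  sgn ti * sj ti ord0 * D = 1 ->
  (forall t, in_ideal2 fj gj (si t ord0 - D * sj t ord0)) ->
  exists Q : 'M[R]_(n, 2), Q *m vec2 fj gj = sgn tj *: (Delta ti *m Tp ti si *m sj).
Proof.
move=> sD1 sI; apply: in_ideal2_mulmx_vec2 => a.
rewrite mxE Delta_Tp_mulE.
set u := sj ti ord0; set x := si (lift ti a) ord0; set y := sj (lift ti a) ord0.
have -> : sgn tj * (y - sgn ti * x * u)
    = - (sgn tj * sgn ti * u) * (x - D * y) + sgn tj * y * (1 - sgn ti * u * D).
  by ring.
by rewrite sD1 subrr mulr0 addr0; apply/in_ideal2_mull/sI.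
Qed.

End Transition.

Section TransitionDet.
Variables (R : idomainType) (n : nat).

Lemma sgn_neq0 (t : 'I_n.+1) : sgn t != 0 :> R.
Proof.
by apply/eqP => s0; move/eqP: (mul_sgn_sgn R t); rewrite s0 mul0r eq_sym oner_eq0.
Qed.

Lemma koszul2_exists_det_neq0 (f g : R) :
  koszul2 f g -> exists y : 'cV[R]_2, \det (row_mx (vec2 f g) y) != 0.
Proof.
move=> kos; have [f0|fn0] := eqVneq f 0; last first.
  by exists (vec2 0 1); rewrite det_row_mx_vec2 !mxE /= mulr1 mulr0 subr0.
exists (vec2 1 0); rewrite det_row_mx_vec2 !mxE /= f0 mul0r sub0r mulr1 oppr_eq0.
apply/eqP => g0; have [w [w1 _]] : exists w, 1 = w * g /\ 0 = w * f.
  by apply: kos; rewrite f0 g0 !mulr0.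
by move/eqP: w1; rewrite g0 mulr0 oner_eq0.
Qed.

Lemma det_scale_transition (ti tj : 'I_n.+1) (A : 'M[R]_2) (u h : R) :
  \det A * u = sgn ti * h -> \det ((sgn tj * u) *: A) = sgn ti * u * h.
Proof.
move=> dA; rewrite detZ exprMn !expr2 mul_sgn_sgn mul1r mulrAC -mulrA dA.
by rewrite mulrCA mulrA.
Qed.

Lemma det_transition (ti tj : 'I_n.+1) (si sj : 'cV[R]_n.+1) (fi gi fj gj h : R)
    (A : 'M[R]_2) (P : 'M[R]_n) (Q : 'M[R]_(n, 2)) (Rm : 'M[R]_(2, n)) :
  koszul2 fj gj -> si ti ord0 = sgn ti -> sj tj ord0 = sgn tj ->
  vec2 fi gi = A *m vec2 fj gj -> \det A * sj ti ord0 = sgn ti * h ->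
  Mmat ti si fi gi =
    block_mx P Q Rm ((sgn tj * sj ti ord0) *: A) *m Mmat tj sj fj gj ->
  \det (block_mx P Q Rm ((sgn tj * sj ti ord0) *: A)) = h.
Proof.
move=> kos si_t sj_t vA dA; set c := sgn tj * _; set Z := block_mx _ _ _ _ => EZ.
have [y nz_y] := koszul2_exists_det_neq0 kos.
have Zy : Z *m col_mx 0 y = col_mx (Q *m y) (c *: A *m y).
  by rewrite mul_block_col !mulmx0 !add0r.
set Mj := Mmat tj sj fj gj.
have := det_mulmx Z (bordered Mj tj (Mj *m sj) (col_mx 0 y)).
rewrite mulmx_bordered mulmxA -EZ (eq_det_bordered _ _ sj_t si_t) Zy.
rewrite !det_bordered_Mmat // vA -scalemxAl scalemxAr -mul_mx_row det_mulmx.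
rewrite -[vec2 fj gj]scale1r det_row_mx_scale expr1 mul1r scale1r => detZM.
apply: (mulIf (mulf_neq0 (sgn_neq0 tj) nz_y)); rewrite -detZM.
transitivity (sgn ti * sgn tj * (\det A * sj ti ord0) * \det (row_mx (vec2 fj gj) y)).
  by rewrite /c; ring.
by rewrite dA -[h in RHS]mul1r -(mul_sgn_sgn R ti); ring.
Qed.

End TransitionDet.

Theorem lemma4 (R : idomainType) (n : nat)
  (fi gi fj gj hij hji : R) (Aij Aji : 'M[R]_2)
  (si sj : 'cV[R]_n.+1) (ti tj : 'I_n.+1)
  (* (a): transition functions of L, restricted to U_i \cap U_j *)
  (hij_unit : hij \is a GRing.unit) (hji_unit : hji \is a GRing.unit)
  (hijji : hij * hji = 1)
  (* (b): syzygies of the generators of J, on the affine U_i \cap U_j *)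
  (kos_i : koszul2 fi gi) (kos_j : koszul2 fj gj)
  (* (c) *)
  (hAij : vec2 fi gi = Aij *m vec2 fj gj)
  (hAji : vec2 fj gj = Aji *m vec2 fi gi)
  (* (d): s_{it} = det A_ij / h_ij * s_{jt} modulo J(U_i \cap U_j) = (f_j, g_j),
          and symmetrically *)
  (hd_ij : forall t : 'I_n.+1,
      in_ideal2 fj gj (si t ord0 - \det Aij / hij * sj t ord0))
  (hd_ji : forall t : 'I_n.+1,
      in_ideal2 fi gi (sj t ord0 - \det Aji / hji * si t ord0))
  (* (e) *)
  (hsi : si ti ord0 = sgn ti) (hsj : sj tj ord0 = sgn tj)
  (hsjti_unit : sj ti ord0 \is a GRing.unit)
  (hsitj_unit : si tj ord0 \is a GRing.unit)
  (hdet_ij : \det Aij = sgn ti * hij / sj ti ord0)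
  (hdet_ji : \det Aji = sgn tj * hji / si tj ord0) :
  let Mi := Mmat ti si fi gi in
  let Mj := Mmat tj sj fj gj in
  let c := sgn tj * sj ti ord0 in
  [/\ (* characterization of M_i = Z M_j *)
      (forall (P : 'M[R]_n) (Q : 'M[R]_(n, 2)) (Rm : 'M[R]_(2, n)) (S : 'M[R]_2),
         Mi = block_mx P Q Rm S *m Mj <->
         [/\ P = Pmat ti tj si,
             Rm = Tpp ti fi gi *m Delta' tj,
             Q *m vec2 fj gj = sgn tj *: (Delta ti *m Tp ti si *m sj)
           & S *m vec2 fj gj = c *: vec2 fi gi]),
      (* (iv) holds for S = (-1)^{t_j} s_{j t_i} A_ij *)
      (c *: Aij) *m vec2 fj gj = c *: vec2 fi gi,
      (* existence, with S = (-1)^{t_j} s_{j t_i} A_ij *)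
      (exists (P : 'M[R]_n) (Q : 'M[R]_(n, 2)) (Rm : 'M[R]_(2, n)),
         Mi = block_mx P Q Rm (c *: Aij) *m Mj)
    & (* determinants *)
      (forall (P : 'M[R]_n) (Q : 'M[R]_(n, 2)) (Rm : 'M[R]_(2, n)),
         P = Pmat ti tj si ->
         Rm = Tpp ti fi gi *m Delta' tj ->
         Q *m vec2 fj gj = sgn tj *: (Delta ti *m Tp ti si *m sj) ->
         \det (c *: Aij) = sgn ti * sj ti ord0 * hij /\
         \det (block_mx P Q Rm (c *: Aij)) = hij)].
Proof.
move=> Mi Mj c.
have dA : \det Aij * sj ti ord0 = sgn ti * hij by rewrite hdet_ij divrK.
have sD1 : sgn ti * sj ti ord0 * (\det Aij / hij) = 1.
  transitivity (sgn ti * (\det Aij * sj ti ord0) / hij); first by ring.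
  by rewrite dA mulrA mul_sgn_sgn mul1r mulrV.
have charZ P Q Rm S := Mmat_eq_block_mulP ti si fi gi fj gj P Q Rm S hsj.
have vA : (c *: Aij) *m vec2 fj gj = c *: vec2 fi gi by rewrite -scalemxAl -hAij.
split => //.
  have [Q EQ] := exists_transition_Q tj sD1 hd_ij.
  by exists (Pmat ti tj si), Q, (Tpp ti fi gi *m Delta' tj); apply/charZ.
move=> P Q Rm EP ER EQ; split; first exact: det_scale_transition.
by apply: (det_transition kos_j hsi hsj hAij dA); apply/charZ.
Qed.
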